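(* Let $M$ be a smooth manifold of dimension $n>2$ and let $K$ be a semi-basic, vector-valued $2$-form on $T_0M$. Then $$ i_K\omega=0 \quad\text{for all } \omega\in\Lambda^2(T_0M) \text{ with } i_J\omega=0 $$ holds if and only if there exists a semi-basic $1$-form $\xi$ on $T_0M$ such that $K=\xi\wedge J$. Moreover, such $\xi=\xi_i\,dx^i$, if it exists, is unique and is given by $(n-1)\xi_i=K^j_{ji}=-K^j_{ij}$.
   Context: $TM$ has induced coordinates $(x^i,y^i)$, $T_0M=TM\setminus\{0\}$, and $J=dx^i\otimes\frac{\partial}{\partial y^i}$ is the vertical endomorphism. A vector-valued $2$-form $K$ on $T_0M$ is semi-basic if it takes vertical values and vanishes whenever one argument is vertical; locally $K=K^i_{jk}\frac{\partial}{\partial y^i}\otimes dx^j\wedge dx^k$ with $K^i_{jk}=-K^i_{kj}$. A semi-basic $1$-form is $\xi=\xi_i(x,y)dx^i$. For $\omega\in\Lambda^2(T_0M)$: $i_J\omega(X,Y)=\omega(JX,Y)+\omega(X,JY)$ and $i_K\omega(X,Y,Z)=\omega(K(X,Y),Z)+\omega(K(Z,X),Y)+\omega(K(Y,Z),X)$. The vector-valued $2$-form $\xi\wedge J$ is $(\xi\wedge J)(X,Y)=\xi(X)JY-\xi(Y)JX$. *)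

(* Local-coordinate (one chart of T_0M) model. *)
From HB Require Import structures.
From mathcomp Require Import all_boot all_order all_algebra.
From mathcomp Require Import reals.
Set Implicit Arguments. Unset Strict Implicit. Unset Printing Implicit Defensive.
Import Order.TTheory GRing.Theory Num.Theory.
Local Open Scope ring_scope.

Section TangentAlgebra.
Variables (R : realType) (n : nat).

(* A tangent vector to TM at a point of the chart, in the induced frame
   (d/dx^1..d/dx^n, d/dy^1..d/dy^n): the first n coordinates are the
   d/dx-components, the last n the d/dy-components. *)
Definition tvec := 'rV[R]_(n + n).

Definition dx (j : 'I_n) (X : tvec) : R := X 0 (lshift n j).
Definition dy (i : 'I_n) (X : tvec) : R := X 0 (rshift n i).

Definition vert (v : 'rV[R]_n) : tvec := row_mx 0 v.

Definition J (X : tvec) : tvec := vert (\row_i dx i X).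

(* A 2-form at a point: omega(X,Y) = X W Y^T with W skew-symmetric. *)
Definition form2 (W : 'M[R]_(n + n)) (X Y : tvec) : R :=
  \sum_a \sum_b X 0 a * W a b * Y 0 b.

(* semi-basic vector-valued 2-form with components
   K^i_{jk} = dy^i (K (d/dx^j, d/dx^k)), i.e. Kc i j k = K^i_{jk} *)
Definition Kval (Kc : 'I_n -> 'I_n -> 'I_n -> R) (X Y : tvec) : tvec :=
  vert (\row_i \sum_j \sum_k Kc i j k * dx j X * dx k Y).

Definition form1 (xi : 'I_n -> R) (X : tvec) : R := \sum_j xi j * dx j X.

Definition wedgeJ (xi : 'I_n -> R) (X Y : tvec) : tvec :=
  form1 xi X *: J Y - form1 xi Y *: J X.

Definition iJ (W : 'M[R]_(n + n)) (X Y : tvec) : R :=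
  form2 W (J X) Y + form2 W X (J Y).

Definition iK (Kc : 'I_n -> 'I_n -> 'I_n -> R) (W : 'M[R]_(n + n))
  (X Y Z : tvec) : R :=
  form2 W (Kval Kc X Y) Z + form2 W (Kval Kc Z X) Y + form2 W (Kval Kc Y Z) X.

End TangentAlgebra.

(* If K = xi /\ J, the cyclic sum i_K omega cancels term by term, because
   i_J omega = 0 together with skew-symmetry makes (X, Y) |-> omega(JX, Y)
   symmetric. Conversely, for symmetric S the 2-form S_{ik} dx^i /\ dy^k is
   killed by i_J; evaluating i_K of it on d/dx^a, d/dx^b, d/dx^c with
   S = E_pc + E_cp and summing over c gives
   (n - 1) K^p_{ab} = delta^p_b K^j_{aj} - delta^p_a K^j_{bj},
   i.e. K = xi /\ J with (n - 1) xi_a = K^j_{aj}. The same contraction applied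
   to any K = xi /\ J recovers xi, whence uniqueness. *)

From HB Require Import structures.
From mathcomp Require Import all_boot all_order all_algebra.
From mathcomp Require Import reals.
From mathcomp Require Import ring.
From Stdlib Require Import FunctionalExtensionality.
Set Implicit Arguments. Unset Strict Implicit. Unset Printing Implicit Defensive.
Import Order.TTheory GRing.Theory Num.Theory.
Local Open Scope ring_scope.

Lemma sumr_delta (R : pzSemiRingType) (I : finType) (F : I -> R) (i : I) :
  \sum_k (k == i)%:R * F k = F i.
Proof.
rewrite (bigD1 i) //= eqxx mul1r big1 ?addr0 // => k /negbTE ->.
by rewrite mul0r.
Qed.

Lemma natr_pred (R : pzSemiRingType) n (i : 'I_n) : n%:R = n.-1%:R + 1 :> R.
Proof. by rewrite natr1 prednK // (leq_ltn_trans (leq0n i) (ltn_ord i)). Qed.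

Lemma natr_pred_neq0 (R : numDomainType) n : (1 < n)%N -> n.-1%:R != 0 :> R.
Proof. by move=> n_gt1; rewrite pnatr_eq0 -lt0n -ltnS prednK // ltnW. Qed.

Section Coordinates.
Variables (R : realType) (n : nat).
Implicit Types (W : 'M[R]_(n + n)) (X Y : tvec R n) (u : 'rV[R]_n).

Definition hbasis (a : 'I_n) : tvec R n := row_mx (delta_mx 0 a) 0.

Lemma dy_vert j u : dy j (vert u) = u 0 j.
Proof. by rewrite /dy /vert row_mxEr. Qed.

Lemma dx_hbasis j a : dx j (hbasis a) = (j == a)%:R.
Proof. by rewrite /dx /hbasis row_mxEl mxE eqxx. Qed.

Lemma J_lsubmx X : J X = row_mx 0 (lsubmx X).
Proof. by congr row_mx; apply/rowP => i; rewrite !mxE. Qed.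

Lemma form2E W X Y : form2 W X Y = (X *m W *m Y^T) 0 0.
Proof.
rewrite !mxE /form2 exchange_big; apply: eq_bigr => b _.
by rewrite mxE mulr_suml; apply: eq_bigr => a _; rewrite !mxE.
Qed.

Lemma form2_skew W X Y : W^T = - W -> form2 W X Y = - form2 W Y X.
Proof.
move=> skewW; rewrite !form2E.
have -> : (X *m W *m Y^T) 0 0 = ((X *m W *m Y^T)^T) 0 0 by rewrite [RHS]mxE.
by rewrite !trmx_mul trmxK skewW mulNmx mulmxN mulmxA mxE.
Qed.

End Coordinates.
Arguments hbasis {R n}.

Section SemiBasicForms.
Variables (R : realType) (n : nat).
Implicit Types (W : 'M[R]_(n + n)) (X Y Z : tvec R n) (xi : 'I_n -> R)
  (Kc : 'I_n -> 'I_n -> 'I_n -> R).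

Lemma form1_hbasis xi a : form1 xi (hbasis a) = xi a.
Proof.
by rewrite /form1 -(sumr_delta _ a); apply: eq_bigr => j _; rewrite dx_hbasis mulrC.
Qed.

Lemma wedgeJE xi X Y :
  wedgeJ xi X Y = vert (\row_i (form1 xi X * dx i Y - form1 xi Y * dx i X)).
Proof.
rewrite /wedgeJ /J /vert !scale_row_mx opp_row_mx add_row_mx !scaler0 subr0.
by congr row_mx; apply/rowP => i; rewrite !mxE.
Qed.

Lemma Kval_hbasis Kc a b : Kval Kc (hbasis a) (hbasis b) = vert (\row_i Kc i a b).
Proof.
congr vert; apply/rowP => i; rewrite !mxE.
under eq_bigr => j _ do under eq_bigr => k _ do rewrite !dx_hbasis mulrC.
under eq_bigr => j _ do rewrite sumr_delta mulrC.
exact: sumr_delta.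
Qed.

Lemma Kval_eq_wedgeJP Kc xi :
  (forall X Y, Kval Kc X Y = wedgeJ xi X Y) <->
  (forall i j k, Kc i j k = xi j * (i == k)%:R - xi k * (i == j)%:R).
Proof.
split=> [hK i j k | hK X Y].
  have := congr1 (dy i) (hK (hbasis j) (hbasis k)).
  by rewrite Kval_hbasis wedgeJE !dy_vert !mxE !form1_hbasis !dx_hbasis.
rewrite wedgeJE /Kval; congr vert; apply/rowP => i; rewrite !mxE.
under eq_bigr => j _ do under eq_bigr => k _ do rewrite hK.
transitivity (\sum_j (xi j * dx j X) * \sum_k (k == i)%:R * dx k Y
              - \sum_j (j == i)%:R * dx j X * \sum_k xi k * dx k Y).
  rewrite -sumrB; apply: eq_bigr => j _.
  rewrite !mulr_sumr -sumrB; apply: eq_bigr => k _.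
  by rewrite ![_ == i]eq_sym; ring.
by rewrite sumr_delta -!mulr_suml sumr_delta [dx i X * _]mulrC.
Qed.

Lemma form2_wedgeJl W xi X Y Z :
  form2 W (wedgeJ xi X Y) Z =
  form1 xi X * form2 W (J Y) Z - form1 xi Y * form2 W (J X) Z.
Proof.
rewrite /form2 !mulr_sumr -sumrB; apply: eq_bigr => a _.
by rewrite !mulr_sumr -sumrB; apply: eq_bigr => b _; rewrite !mxE; ring.
Qed.

Lemma iJ_eq0_form2J_sym W X Y :
  W^T = - W -> iJ W X Y = 0 -> form2 W (J X) Y = form2 W (J Y) X.
Proof.
by move=> skewW; rewrite /iJ (form2_skew X (J Y) skewW) => /eqP; rewrite subr_eq0 => /eqP.
Qed.

Lemma iK_eq0_of_wedgeJ Kc xi W :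
  W^T = - W -> (forall X Y, iJ W X Y = 0) ->
  (forall X Y, Kval Kc X Y = wedgeJ xi X Y) ->
  forall X Y Z, iK Kc W X Y Z = 0.
Proof.
move=> skewW hJ hK X Y Z.
have sym U V := iJ_eq0_form2J_sym skewW (hJ U V).
rewrite /iK !hK !form2_wedgeJl (sym Z Y) (sym Z X) (sym Y X); ring.
Qed.

End SemiBasicForms.

Section TestForms.
Variables (R : realType) (n : nat).
Implicit Types (X Y : tvec R n) (u : 'rV[R]_n) (S : 'M[R]_n)
  (Kc : 'I_n -> 'I_n -> 'I_n -> R).

(* The 2-form S_{ik} dx^i /\ dy^k. *)
Definition dxdy_form S : 'M[R]_(n + n) := block_mx 0 S (- S) 0.

Lemma dxdy_form_skew S : S^T = S -> (dxdy_form S)^T = - dxdy_form S.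
Proof.
move=> symS; rewrite /dxdy_form tr_block_mx opp_block_mx !trmx0 oppr0 opprK symS.
by rewrite linearN /= symS.
Qed.

Lemma form2_dxdy_form S X Y :
  form2 (dxdy_form S) X Y =
  (lsubmx X *m S *m (rsubmx Y)^T - rsubmx X *m S *m (lsubmx Y)^T) 0 0.
Proof.
rewrite form2E -{1}[X]hsubmxK -{1}[Y]hsubmxK mul_row_block tr_row_mx mul_row_col.
by rewrite !mulmx0 add0r addr0 mulmxN mulNmx addrC.
Qed.

Lemma iJ_dxdy_form S X Y : iJ (dxdy_form S) X Y = 0.
Proof.
rewrite /iJ !form2_dxdy_form !J_lsubmx !row_mxKl !row_mxKr.
by rewrite trmx0 !mul0mx !mulmx0 sub0r subr0 !mxE addNr.
Qed.

Lemma form2_dxdy_form_vert_hbasis S u c :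
  form2 (dxdy_form S) (vert u) (hbasis c) = - \sum_i u 0 i * S i c.
Proof.
rewrite form2_dxdy_form /vert /hbasis !row_mxKl !row_mxKr.
by rewrite trmx0 !mul0mx sub0r trmx_delta -colE !mxE.
Qed.

Lemma iK_dxdy_form_hbasis Kc S a b c :
  iK Kc (dxdy_form S) (hbasis a) (hbasis b) (hbasis c) =
  - \sum_i (Kc i a b * S i c + Kc i c a * S i b + Kc i b c * S i a).
Proof.
rewrite /iK !Kval_hbasis !form2_dxdy_form_vert_hbasis -!opprD -!big_split.
by congr (- _); apply: eq_bigr => i _; rewrite !mxE.
Qed.

End TestForms.

Section Contraction.
Variables (R : realType) (n : nat).
Implicit Types (xi : 'I_n -> R) (Kc : 'I_n -> 'I_n -> 'I_n -> R).

Definition Ktrace Kc (a : 'I_n) : R := \sum_j Kc j a j.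

Lemma sum_mul_symdelta (u : 'I_n -> R) (p c k : 'I_n) :
  \sum_i u i * (delta_mx p c + delta_mx c p : 'M[R]_n) i k =
  (k == c)%:R * u p + (k == p)%:R * u c.
Proof.
under eq_bigr => i _ do rewrite !mxE -!mulnb !natrM mulrDr.
rewrite big_split /= -(sumr_delta u p) -(sumr_delta u c) !mulr_sumr.
by congr (_ + _); apply: eq_bigr => i _; ring.
Qed.

Lemma contraction_of_iK_dxdy_form Kc :
  (forall i j k, Kc i j k = - Kc i k j) ->
  (forall S, S^T = S -> forall X Y Z, iK Kc (dxdy_form S) X Y Z = 0) ->
  forall p a b, (n.-1)%:R * Kc p a b =
    (p == b)%:R * Ktrace Kc a - (p == a)%:R * Ktrace Kc b.
Proof.
move=> skewK hiK p a b.
have hsum : \sum_c (Kc p a b + (c == p)%:R * Kc c a b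
    + ((c == b)%:R * Kc p c a + (b == p)%:R * Kc c c a)
    + ((c == a)%:R * Kc p b c + (a == p)%:R * Kc c b c)) = 0.
  apply: big1 => c _.
  have symS : (delta_mx p c + delta_mx c p : 'M[R]_n)^T = delta_mx p c + delta_mx c p.
    by rewrite linearD /= !trmx_delta addrC.
  have := hiK _ symS (hbasis a) (hbasis b) (hbasis c).
  rewrite iK_dxdy_form_hbasis !big_split /= !sum_mul_symdelta eqxx mul1r.
  by rewrite (eq_sym b c) (eq_sym a c) => /eqP; rewrite oppr_eq0 => /eqP.
have trace_skew : \sum_c Kc c c a = - Ktrace Kc a.
  by rewrite -sumrN; apply: eq_bigr => c _; rewrite skewK.
rewrite !big_split /= sumr_const card_ord !sumr_delta -!mulr_sumr trace_skew in hsum.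
rewrite (skewK p b a) -[Kc p a b *+ n]mulr_natr (natr_pred R p) in hsum.
apply: subr0_eq; rewrite -[RHS]hsum (eq_sym p b) (eq_sym p a) /Ktrace; ring.
Qed.

Lemma Kval_eq_wedgeJ_Ktrace Kc :
  (1 < n)%N -> (forall i j k, Kc i j k = - Kc i k j) ->
  (forall S, S^T = S -> forall X Y Z, iK Kc (dxdy_form S) X Y Z = 0) ->
  forall X Y, Kval Kc X Y = wedgeJ (fun a => (n.-1)%:R^-1 * Ktrace Kc a) X Y.
Proof.
move=> n_gt1 skewK hiK; apply/Kval_eq_wedgeJP => i j k.
rewrite -[Kc i j k](mulKf (natr_pred_neq0 R n_gt1)) contraction_of_iK_dxdy_form //; ring.
Qed.

Lemma Ktrace_wedgeJ Kc xi :
  (forall X Y, Kval Kc X Y = wedgeJ xi X Y) ->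
  forall i, Ktrace Kc i = (n.-1)%:R * xi i.
Proof.
move/Kval_eq_wedgeJP => hK i; rewrite /Ktrace.
under eq_bigr => j _ do rewrite hK eqxx mulr1 mulrC.
by rewrite sumrB sumr_const card_ord sumr_delta -[xi i *+ n]mulr_natr (natr_pred R i); ring.
Qed.

End Contraction.

Theorem proposition3p2 (R : realType) (n : nat) (P : Type)
    (K : P -> 'I_n -> 'I_n -> 'I_n -> R) :
  (2 < n)%N ->
  (forall p i j k, K p i j k = - K p i k j) ->
  ((forall W : P -> 'M[R]_(n + n),
      (forall p, (W p)^T = - W p) ->
      (forall p (X Y : tvec R n), iJ (W p) X Y = 0) ->
      forall p (X Y Z : tvec R n), iK (K p) (W p) X Y Z = 0)
   <->
   (exists xi : P -> 'I_n -> R,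
      forall p (X Y : tvec R n), Kval (K p) X Y = wedgeJ (xi p) X Y))
  /\
  (forall xi1 xi2 : P -> 'I_n -> R,
      (forall p (X Y : tvec R n), Kval (K p) X Y = wedgeJ (xi1 p) X Y) ->
      (forall p (X Y : tvec R n), Kval (K p) X Y = wedgeJ (xi2 p) X Y) ->
      xi1 = xi2)
  /\
  (forall xi : P -> 'I_n -> R,
      (forall p (X Y : tvec R n), Kval (K p) X Y = wedgeJ (xi p) X Y) ->
      forall p (i : 'I_n),
        (n.-1)%:R * xi p i = \sum_(j < n) K p j i j /\
        \sum_(j < n) K p j i j = - \sum_(j < n) K p j j i).
Proof.
move=> n_gt2 skewK; have n_gt1 := ltnW n_gt2.
have n1_neq0 := natr_pred_neq0 R n_gt1.
split; [split | split].
- move=> hiK; exists (fun p a => (n.-1)%:R^-1 * Ktrace (K p) a) => p.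
  apply: (Kval_eq_wedgeJ_Ktrace n_gt1 (skewK p)) => S symS.
  exact: hiK (fun=> dxdy_form S) (fun=> dxdy_form_skew symS) (fun _ => iJ_dxdy_form S) p.
- by case=> xi hK W skewW hJ p; apply: iK_eq0_of_wedgeJ (hK p).
- move=> xi1 xi2 hK1 hK2; apply: functional_extensionality => p.
  apply: functional_extensionality => i; apply: (mulfI n1_neq0).
  by rewrite -(Ktrace_wedgeJ (hK1 p)) -(Ktrace_wedgeJ (hK2 p)).
- move=> xi hK p i; split; first by rewrite -(Ktrace_wedgeJ (hK p)).
  by rewrite -sumrN; apply: eq_bigr => j _; rewrite skewK.
Qed.
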